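(* Let $B$ be a proper $\mathbb{C}(z)$-submodule of $\mathbb{C}(z)\otimes\mathbb{C}^r$ and $B^*=B\cap(\mathbb{C}[z]\otimes\mathbb{C}^r)$. A vectorial $pg$-sequence $u_{\omega,h}$ is orthogonal to $B$ if and only if it is orthogonal to $B^*$.
   Context: $\mathbb{C}(z)$ is the Laurent polynomial ring in $z_1,\dots,z_d$ and $\mathbb{C}[z]$ the polynomial ring. A vectorial $pg$-sequence is $u_{\omega,h}:\mathbb{Z}^d\to\mathbb{C}^r$, $k\mapsto\omega^kh(k)$, with $\omega\in(\mathbb{C}\setminus\{0\})^d$, $\omega^k=\prod_i\omega_i^{k_i}$, $h\in\mathbb{C}[z]\otimes\mathbb{C}^r$. For $p=\sum_ka_kz^k\in\mathbb{C}(z)\otimes\mathbb{C}^r$ and $u:\mathbb{Z}^d\to\mathbb{C}^r$, $\langle p,u\rangle=\sum_ka_k\cdot u(k)$; $u$ is orthogonal to a set $S$ if $\langle p,u\rangle=0$ for all $p\in S$. *)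

From HB Require Import structures.
From mathcomp Require Import all_boot all_order all_algebra.
From mathcomp Require Import finmap.
From mathcomp Require Import complex.
From mathcomp Require Import reals.
From mathcomp Require mpoly.
Set Implicit Arguments. Unset Strict Implicit. Unset Printing Implicit Defensive.
Import Order.TTheory GRing.Theory Num.Theory.
Local Open Scope ring_scope.

(* An element of C(z) (x) C^r (Laurent polynomial vector) sum_k a_k z^k is
   represented by its finitely supported coefficient map k |-> a_k,
   i.e. an element of {fsfun 'rV[int]_d -> 'rV[C]_r with 0}. *)

Definition LVec (C : nzRingType) (d r : nat) :=
  {fsfun 'rV[int]_d -> 'rV[C]_r with 0}.

Definition is_polyvec (C : nzRingType) (d r : nat) (p : LVec C d r) : Prop :=
  forall k, k \in finsupp p -> forall j : 'I_d, (0 <= k 0 j)%R.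

(* B is a C(z)-submodule of C(z) (x) C^r: contains 0, closed under addition,
   under complex scalars and under multiplication by monomials z^m, m in Z^d
   (together these give closure under multiplication by Laurent polynomials). *)
Definition is_Lsubmodule (C : nzRingType) (d r : nat) (B : LVec C d r -> Prop) : Prop :=
  [/\ (forall p : LVec C d r, (forall k, p k = 0) -> B p),
      (forall p q s : LVec C d r, B p -> B q -> (forall k, s k = p k + q k) -> B s),
      (forall (c : C) (p s : LVec C d r), B p -> (forall k, s k = c *: p k) -> B s) &
      (forall (m : 'rV[int]_d) (p s : LVec C d r), B p -> (forall k, s k = p (k - m)) -> B s)].

Definition proper_set (C : nzRingType) (d r : nat) (B : LVec C d r -> Prop) : Prop :=
  exists p : LVec C d r, ~ B p.

Definition polypart (C : nzRingType) (d r : nat) (B : LVec C d r -> Prop) : LVec C d r -> Prop :=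
  fun p => B p /\ is_polyvec p.

Definition pairing (C : nzRingType) (d r : nat) (p : LVec C d r)
  (u : 'rV[int]_d -> 'rV[C]_r) : C :=
  \sum_(k <- finsupp p) \sum_(i < r) p k 0 i * u k 0 i.

Definition orthogonal_to (C : nzRingType) (d r : nat) (u : 'rV[int]_d -> 'rV[C]_r)
  (S : LVec C d r -> Prop) : Prop :=
  forall p, S p -> pairing p u = 0.

Definition monom_pow (C : unitRingType) (d : nat) (w : 'rV[C]_d) (k : 'rV[int]_d) : C :=
  \prod_(i < d) w 0 i ^ k 0 i.

Definition pg_seq (C : comUnitRingType) (d r : nat) (w : 'rV[C]_d)
  (h : 'I_r -> mpoly.mpoly d C) : 'rV[int]_d -> 'rV[C]_r :=
  fun k => \row_(i < r) (monom_pow w k *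
            mpoly.meval (fun j : 'I_d => (k 0 j)%:~R) (h i)).

From HB Require Import structures.
From mathcomp Require Import all_boot all_order all_algebra.
From mathcomp Require Import finmap complex reals mpoly.
Import Order.TTheory GRing.Theory Num.Theory.
Local Open Scope ring_scope.

Set Implicit Arguments. Unset Strict Implicit. Unset Printing Implicit Defensive.

(* Translating p in B by a monomial z^m stays in B, and for m large enough in
   every coordinate z^m p is a polynomial vector, so orthogonality to B* gives
   <z^m p, u> = 0.  For u = u_{w,h} this pairing is w^m G(m), where
   G(m) = sum_k a_k . w^k h(k + m) is polynomial in m: a power of every forward
   difference operator kills it.  Such a function vanishing on a translated
   orthant vanishes everywhere, and G(0) = <p, u>. *)

Section FiniteDifference.
Variables (C : zmodType) (d : nat).
Implicit Types (f g : 'rV[int]_d -> C) (a m : 'rV[int]_d) (j : 'I_d).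

Definition fdiff j f m : C := f (m + 'e_j) - f m.

Definition fdiff_nil j f := exists n, forall m, iter n (fdiff j) f m = 0.

Lemma eq_iter_fdiff j n f g : f =1 g -> iter n (fdiff j) f =1 iter n (fdiff j) g.
Proof. by move=> fg; elim: n => //= n IH m; rewrite /fdiff !IH. Qed.

Lemma iter_fdiff_eq0 j n f : f =1 (fun=> 0) -> iter n (fdiff j) f =1 (fun=> 0).
Proof. by move=> f0; elim: n => //= n IH m; rewrite /fdiff !IH subrr. Qed.

Lemma iter_fdiffD j n f g m :
  iter n (fdiff j) (fun x => f x + g x) m = iter n (fdiff j) f m + iter n (fdiff j) g m.
Proof. by elim: n m => //= n IH m; rewrite /fdiff !IH addrACA opprD. Qed.

Lemma fdiff_nil_eq j f g : f =1 g -> fdiff_nil j f -> fdiff_nil j g.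
Proof. by move=> fg [n fn]; exists n => m; rewrite -(eq_iter_fdiff _ _ fg). Qed.

Lemma fdiff_nilD j f g : fdiff_nil j f -> fdiff_nil j g -> fdiff_nil j (fun x => f x + g x).
Proof.
move=> [n1 f0] [n2 g0]; exists (n1 + n2)%N => m; rewrite iter_fdiffD.
by rewrite {1}(addnC n1 n2) iterD iter_fdiff_eq0 // add0r iterD iter_fdiff_eq0.
Qed.

Lemma fdiff_nil_sum j (I : Type) (s : seq I) (F : I -> 'rV[int]_d -> C) :
  (forall i, fdiff_nil j (F i)) -> fdiff_nil j (fun m => \sum_(i <- s) F i m).
Proof.
move=> Fnil; elim: s => [|i s IH]; first by exists 0%N => m; apply: big_nil.
by apply: fdiff_nil_eq (fdiff_nilD (Fnil i) IH) => m; rewrite big_cons.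
Qed.

Lemma fdiff_nilS j f : fdiff_nil j (fdiff j f) -> fdiff_nil j f.
Proof. by case=> n fn; exists n.+1 => m; rewrite iterSr. Qed.

Definition vanishes_above f a := forall m, (forall l, a 0 l <= m 0 l) -> f m = 0.

Lemma vanishes_above_pred j f a :
  fdiff_nil j f -> vanishes_above f a -> vanishes_above f (a - 'e_j).
Proof.
have shift_entry m l : (m + 'e_j) 0 l = m 0 l + (l == j)%:R.
  by rewrite !mxE eqxx.
(* Induction on the nilpotency index: f m = f (m + 'e_j) - fdiff j f m, and
   fdiff j f still vanishes above a. *)
move=> [n]; elim: n f => [|n IH] f fn fa m ma; first exact: fn.
have dfa : vanishes_above (fdiff j f) a.
  move=> x xa; rewrite /fdiff (fa x xa) fa ?subrr // => l.
  by rewrite shift_entry (le_trans (xa l)) ?lerDl.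
have fa_m : f (m + 'e_j) = 0.
  by apply: fa => l; move: (ma l); rewrite shift_entry !mxE eqxx /= lerBlDr.
have dfn x : iter n (fdiff j) (fdiff j f) x = 0 by rewrite -iterSr.
by have /eqP := IH _ dfn dfa m ma; rewrite /fdiff fa_m sub0r oppr_eq0 => /eqP.
Qed.

Lemma vanishes_above_sub_sum f a (s : seq 'I_d) : (forall j, fdiff_nil j f) ->
  vanishes_above f a -> vanishes_above f (a - \sum_(j <- s) 'e_j).
Proof.
move=> fnil; elim: s a => [|j s IH] a fa; first by rewrite big_nil subr0.
by rewrite big_cons opprD addrA addrAC; apply/vanishes_above_pred/IH.
Qed.

Lemma sum_delta_row : \sum_(j < d) 'e_j = const_mx 1 :> 'rV[int]_d.
Proof.
apply/rowP => l; rewrite summxE (bigD1 l) //= big1 ?addr0 => [|j jl].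
  by rewrite !mxE !eqxx.
by rewrite mxE eq_sym (negPf jl) andbF.
Qed.

Lemma vanishes_above_eq0 f a :
  (forall j, fdiff_nil j f) -> vanishes_above f a -> forall m, f m = 0.
Proof.
move=> fnil fa m.
have fa_n n : vanishes_above f (a - const_mx n%:Z).
  elim: n => [|n IH].
    by move=> x xa; apply: fa => l; move: (xa l); rewrite !mxE subr0.
  have := vanishes_above_sub_sum (s := index_enum _) fnil IH.
  suff -> : a - const_mx n%:Z - \sum_(j < d) 'e_j = a - const_mx n.+1%:Z by [].
  by rewrite sum_delta_row; apply/rowP => l; rewrite !mxE intS opprD addrAC addrA.
pose n := (\sum_(l < d) `|a ord0 l - m ord0 l|%N)%N.
apply: (fa_n n) => l; rewrite !mxE lerBlDr -lerBlDl.
apply: le_trans (ler_norm _) _; rewrite -abszE lez_nat /n (bigD1 l) //=.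
exact: leq_addr.
Qed.
End FiniteDifference.

Section PolynomialDifference.
Variable d : nat.

Lemma iter_fdiffZ (C : pzRingType) j n (c : C) (f : 'rV[int]_d -> C) m :
  iter n (fdiff j) (fun x => c * f x) m = c * iter n (fdiff j) f m.
Proof. by elim: n m => //= n IH m; rewrite /fdiff !IH mulrBr. Qed.

Lemma fdiff_nilZ (C : pzRingType) j (c : C) (f : 'rV[int]_d -> C) :
  fdiff_nil j f -> fdiff_nil j (fun x => c * f x).
Proof. by move=> [n fn]; exists n => m; rewrite iter_fdiffZ fn mulr0. Qed.

Lemma fdiff_nil_periodic_pow (C : pzRingType) j (A : 'rV[int]_d -> C) (c : C) n :
  (forall m, A (m + 'e_j) = A m) ->
  fdiff_nil j (fun m => A m * ((m 0 j)%:~R + c) ^+ n).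
Proof.
move=> Aper; elim/ltn_ind: n => n IH; apply: fdiff_nilS.
apply: fdiff_nil_eq (fdiff_nil_sum (index_enum 'I_n)
  (F := fun i m => 'C(n, i)%:R * (A m * ((m 0 j)%:~R + c) ^+ i)) _) => [m|i].
  rewrite /fdiff Aper -mulrBr.
  have -> : ((m + 'e_j) 0 j)%:~R + c = (m 0 j)%:~R + c + 1 :> C.
    by rewrite !mxE !eqxx intrD addrAC.
  rewrite exprD1n big_ord_recr /= binn mulr1n addrK mulr_sumr.
  by apply: eq_bigr => i _; rewrite mulr_natl mulrnAr.
exact/fdiff_nilZ/IH.
Qed.

Lemma fdiff_nil_meval (C : comNzRingType) j (k : 'rV[int]_d) (P : {mpoly C[d]}) :
  fdiff_nil j (fun m => P.@[fun l => ((k + m) 0 l)%:~R]).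
Proof.
apply: fdiff_nil_eq (fdiff_nil_sum (msupp P)
  (F := fun e m => P@_e * \prod_l ((k + m) 0 l)%:~R ^+ e l) _) => [m|e].
  by rewrite mevalE.
pose A m := P@_e * \prod_(l | l != j) ((k + m) 0 l)%:~R ^+ e l.
apply: fdiff_nil_eq (fdiff_nil_periodic_pow (A := A) (k 0 j)%:~R (e j) _) => [m|m].
  rewrite [in RHS](bigD1 j) //= mulrCA mulrC; congr (_ ^+ _ * _).
  by rewrite !mxE intrD addrC.
rewrite /A; congr (_ * _); apply: eq_bigr => l lj.
by rewrite addrA !mxE (negPf lj) andbF addr0.
Qed.
End PolynomialDifference.

Section Translation.
Variables (C : nzRingType) (d r : nat).
Implicit Types (p : LVec C d r) (u v : 'rV[int]_d -> 'rV[C]_r) (m : 'rV[int]_d).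

Definition shift_lvec m p : LVec C d r :=
  [fsfun k in [fset (k + m)%R | k in finsupp p]%fset => p (k - m)].

Lemma shift_lvecE m p k : shift_lvec m p k = p (k - m).
Proof.
rewrite fsfunE; case: ifP => // /negbT kND; apply/esym/eqP.
apply: contraNT kND => pk; apply/imfsetP; exists (k - m); last by rewrite subrK.
by rewrite mem_finsupp.
Qed.

Lemma finsupp_shift_lvec m p :
  finsupp (shift_lvec m p) = [fset (k + m)%R | k in finsupp p]%fset.
Proof.
apply/fsetP => k; rewrite mem_finsupp shift_lvecE; apply/idP/imfsetP => [pk|[x px ->]].
  by exists (k - m); rewrite ?mem_finsupp ?subrK.
by rewrite addrK -mem_finsupp.
Qed.

Lemma eq_pairing p u v : u =1 v -> pairing p u = pairing p v.
Proof. by move=> uv; apply: eq_bigr => k _; rewrite uv. Qed.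

Lemma pairing_shift_lvec m p u :
  pairing (shift_lvec m p) u = pairing p (fun k => u (k + m)).
Proof.
rewrite /pairing finsupp_shift_lvec big_imfset => [|x y _ _ /addIr //].
by apply: eq_bigr => k _; rewrite shift_lvecE addrK.
Qed.

Lemma shift_lvec_polyvec_eventually p :
  exists a : 'rV[int]_d,
    forall m, (forall l, a 0 l <= m 0 l) -> is_polyvec (shift_lvec m p).
Proof.
exists (\row_l \sum_(k <- finsupp p) `|k 0 l| : 'rV[int]_d) => m am x.
rewrite finsupp_shift_lvec => /imfsetP[k pk ->] l.
have k_bound : `|k 0 l| <= m 0 l.
  apply: le_trans (am l); rewrite mxE (bigD1_seq k) ?fset_uniq //=.
  by rewrite lerDl sumr_ge0.
by rewrite mxE addrC -[k 0 l]opprK subr_ge0 (le_trans _ k_bound) // -normrN ler_norm.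
Qed.

End Translation.

Lemma pairingZ (C : comNzRingType) d r (p : LVec C d r) c u :
  pairing p (fun k => c *: u k) = c * pairing p u.
Proof.
rewrite /pairing mulr_sumr; apply: eq_bigr => k _; rewrite mulr_sumr.
by apply: eq_bigr => i _; rewrite mxE mulrCA.
Qed.

Section PgSequence.
Variables (C : comUnitRingType) (d r : nat) (w : 'rV[C]_d) (h : 'I_r -> {mpoly C[d]}).

Definition pg_seq_translate (m k : 'rV[int]_d) : 'rV[C]_r :=
  \row_i (monom_pow w k * (h i).@[fun l => ((k + m) 0 l)%:~R]).

Lemma pg_seq_translate0 : pg_seq_translate 0 =1 pg_seq w h.
Proof. by move=> k; apply/rowP => i; rewrite !mxE addr0. Qed.

Lemma fdiff_nil_pairing_translate j (p : LVec C d r) :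
  fdiff_nil j (fun m => pairing p (pg_seq_translate m)).
Proof.
apply: fdiff_nil_sum => k; apply: fdiff_nil_sum => i.
apply: fdiff_nil_eq (fdiff_nilZ (p k 0 i * monom_pow w k) (fdiff_nil_meval j k (h i))).
by move=> m; rewrite mxE mulrA.
Qed.

End PgSequence.

Section MonomialPower.
Variables (C : fieldType) (d : nat) (w : 'rV[C]_d).
Hypothesis w_neq0 : forall j, w 0 j != 0.

Lemma monom_powD k m : monom_pow w (k + m) = monom_pow w k * monom_pow w m.
Proof. by rewrite /monom_pow -big_split; apply: eq_bigr => l _; rewrite mxE expfzDr. Qed.

Lemma monom_pow_neq0 k : monom_pow w k != 0.
Proof. by apply/prodf_neq0 => l _; rewrite expfz_eq0 negb_and w_neq0 orbT. Qed.

Lemma pg_seqD r (h : 'I_r -> {mpoly C[d]}) k m :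
  pg_seq w h (k + m) = monom_pow w m *: pg_seq_translate w h m k.
Proof. by apply/rowP => i; rewrite !mxE monom_powD mulrA [_ * monom_pow w m]mulrC. Qed.

End MonomialPower.

Theorem lemma4p8 (R : realType) (d r : nat) (B : LVec R[i] d r -> Prop)
  (HB : is_Lsubmodule B) (Hprop : proper_set B)
  (w : 'rV[R[i]]_d) (Hw : forall j : 'I_d, w 0 j != 0)
  (h : 'I_r -> mpoly.mpoly d R[i]) :
  orthogonal_to (pg_seq w h) B <-> orthogonal_to (pg_seq w h) (polypart B).
Proof.
case: HB => _ _ _ B_shift.
split=> [orthB p [Bp _] | orthB p Bp]; first exact: orthB.
pose G m := pairing p (pg_seq_translate w h m).
have [a polyvec_above] := shift_lvec_polyvec_eventually p.
have G_above : vanishes_above G a.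
  move=> m /polyvec_above shift_poly.
  have Bshift := B_shift m p _ Bp (shift_lvecE m p).
  have /eqP := orthB _ (conj Bshift shift_poly).
  rewrite pairing_shift_lvec (eq_pairing _ (pg_seqD Hw h^~ m)) pairingZ mulf_eq0.
  by rewrite (negPf (monom_pow_neq0 Hw m)) => /eqP.
have := vanishes_above_eq0 (fun j => fdiff_nil_pairing_translate w h j p) G_above 0.
by rewrite /G (eq_pairing _ (pg_seq_translate0 w h)).
Qed.
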